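(* Let $\omega\colon\mathbf Z_+\to(0,+\infty)$ be a weight which is bounded from below, such that $\mathcal T$ is bounded on $\mathcal X_\omega$, and such that there exists $\rho>1$ for which the sequence $(\rho^n/\omega(k2^n))_{n\ge0}$ is bounded for every $k\ge3$. Then $\mathcal T$ satisfies the Godefroy–Shapiro Criterion on $\mathcal X_\omega$, i.e. both subspaces $\mathrm{span}[\ker(\mathcal T-\mu);\ |\mu|<1]$ and $\mathrm{span}[\ker(\mathcal T-\mu);\ |\mu|>1]$ are dense in $\mathcal X_\omega$. In particular this holds for $\omega=\omega_0$, $\omega_0(n)=(n+1)/\pi$ (with $\rho=2$).
   Context: $T\colon\mathbf Z_+\to\mathbf Z_+$ is the modified Collatz map: $T(n)=n/2$ for $n$ even, $T(n)=(3n+1)/2$ for $n$ odd. $\mathcal X_\omega$ is the Hilbert space of holomorphic functions $f(z)=\sum_{n\ge3}c_nz^n$ on the unit disk with $\|f\|_\omega^2=\sum_{n\ge3}|c_n|^2/\omega(n)<\infty$. $\mathcal T\sum_{n\ge3}c_nz^n=\sum_{j\ge3,\,T(j)\ge3}c_jz^{T(j)}$. $\mathcal T$ is bounded on $\mathcal X_\omega$ iff the sequences $\omega(6m)/\omega(3m)$, $\omega(6m+2)/\omega(3m+1)$, $(\omega(6m+4)+\omega(2m+1))/\omega(3m+2)$ ($m\ge1$) are bounded; this holds for $\omega_0$. *)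

From Stdlib Require Import Reals Lra Lia Arith List.
From Coquelicot Require Import Coquelicot.
Open Scope R_scope.

Definition collatz (n : nat) : nat :=
  if Nat.even n then Nat.div n 2 else Nat.div (3 * n + 1) 2.

(* Elements of X_omega are represented by their Taylor coefficient sequences
   c : nat -> C, with c n = 0 for n < 3 (f(z) = sum_{n>=3} c_n z^n). *)
Definition wterm (omega : nat -> R) (c : nat -> C) (n : nat) : R :=
  if (3 <=? n)%nat then (Cmod (c n)) ^ 2 / omega n else 0.

Definition inX (omega : nat -> R) (c : nat -> C) : Prop :=
  (forall n, (n < 3)%nat -> c n = 0%C) /\ ex_series (wterm omega c).

Definition wnorm (omega : nat -> R) (c : nat -> C) : R :=
  sqrt (Series (wterm omega c)).

Definition csub (c d : nat -> C) : nat -> C := fun n => (c n - d n)%C.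

(* The operator cal T: (T c)_m = sum_{j >= 3, T(j) = m} c_j for m >= 3, and 0
   for m < 3.  Since T(j) >= j/2, only j <= 2m contribute. *)
Definition Top (c : nat -> C) : nat -> C :=
  fun m => if (3 <=? m)%nat then
             sum_n_m (fun j => if Nat.eqb (collatz j) m then c j else zero) 3 (2 * m)
           else 0%C.

Definition T_bounded (omega : nat -> R) : Prop :=
  exists M : R, forall c, inX omega c ->
    inX omega (Top c) /\ wnorm omega (Top c) <= M * wnorm omega c.

Definition eigvec (omega : nat -> R) (mu : C) (g : nat -> C) : Prop :=
  inX omega g /\ forall m, Top g m = (mu * g m)%C.

(* f is in span[ ker(T - mu) ; P mu ]: a finite linear combination
   sum_i a_i g_i with g_i in ker(T - mu_i), P mu_i. *)
Definition in_eigspan (omega : nat -> R) (P : C -> Prop) (f : nat -> C) : Prop :=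
  exists l : list (C * C * (nat -> C)),
    (forall t, In t l -> P (snd (fst t)) /\ eigvec omega (snd (fst t)) (snd t)) /\
    forall n, f n = fold_right (fun t acc => (fst (fst t) * snd t n + acc)%C) 0%C l.

Definition dense_in_X (omega : nat -> R) (S : (nat -> C) -> Prop) : Prop :=
  forall f, inX omega f -> forall eps : R, 0 < eps ->
    exists g, S g /\ wnorm omega (csub f g) < eps.

Definition godefroy_shapiro (omega : nat -> R) : Prop :=
  dense_in_X omega (in_eigspan omega (fun mu => Cmod mu < 1)) /\
  dense_in_X omega (in_eigspan omega (fun mu => Cmod mu > 1)).

Definition omega0 (n : nat) : R := (INR n + 1) / PI.

From Stdlib Require Import Reals Lra Lia Arith List FunctionalExtensionality Classical.
From Coquelicot Require Import Coquelicot.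
Open Scope R_scope.

(* For [a >= 3] and [|mu|] small enough, [u_a(mu) = sum_n mu^n e_(a 2^n)] satisfies
   [T u_a(mu) = mu u_a(mu) + e_(T a)], because [T] halves [a 2^(n+1)].  Hence [u_4(mu)] (as
   [T 4 = 2] lies outside the space) and [u_k(mu) - u_(3k+1)(mu)] for odd [k] (both have image
   [(3k+1)/2]) are eigenvectors.  Averaging them against [mu^-m] over the [q]-th roots of unity on
   the circle [|mu| = r] (a discrete Cauchy formula) puts [e_(4 2^m)] and [e_(k 2^m) - e_((3k+1) 2^m)]
   in the closed span of the eigenvectors with [|mu| = r]; the aliasing error is a tail of
   [sum_n r^(2n) / omega(a 2^n)], which converges for [r = 1/2] and for [r^2 = (1 + rho)/2].
   Thus every [e_a] is linked in the closure to some [e_b] with [b > a].  Following such a chain,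
   [N e_a] is congruent to [e_(a_1) + ... + e_(a_N)], whose squared norm is at most [N / delta];
   dividing by [N] puts [e_a] itself in the closure, and the [e_a] span a dense subspace. *)

(** * Preimages under the Collatz map *)

Lemma collatz_double t : collatz (2 * t) = t.
Proof.
  unfold collatz. rewrite Nat.even_even, Nat.mul_comm. apply Nat.div_mul. lia.
Qed.

Lemma collatz_odd t : collatz (2 * t + 1) = (3 * t + 2)%nat.
Proof.
  unfold collatz. replace (2 * t + 1)%nat with (1 + 2 * t)%nat by lia.
  rewrite Nat.even_add_mul_2. cbn [Nat.even negb].
  replace (3 * (1 + 2 * t) + 1)%nat with ((3 * t + 2) * 2)%nat by lia.
  apply Nat.div_mul. lia.
Qed.

Lemma collatz_eq_iff j m : collatz j = m <-> (j = 2 * m \/ 3 * j + 1 = 2 * m)%nat.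
Proof.
  destruct (Nat.Even_or_Odd j) as [[t ->]|[t ->]];
    [rewrite collatz_double | rewrite collatz_odd]; lia.
Qed.

Lemma sum_n_m_zero_loc (f : nat -> C) a b :
  (forall j, (a <= j <= b)%nat -> f j = zero) -> sum_n_m f a b = zero.
Proof.
  intros H. rewrite (sum_n_m_ext_loc f (fun _ => zero)) by auto.
  apply sum_n_m_const_zero.
Qed.

Lemma sum_n_m_indicator (v : C) a p b : (a <= p <= b)%nat ->
  sum_n_m (fun j => if (j =? p)%nat then v else zero) a b = v.
Proof.
  revert p. induction b as [|b IH]; intros p Hp.
  - assert (a = 0 /\ p = 0)%nat as [-> ->] by lia. now rewrite sum_n_n.
  - rewrite sum_n_Sm by lia.
    destruct (Nat.eq_dec p (S b)) as [->|Hne].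
    + rewrite sum_n_m_zero_loc, Nat.eqb_refl; [apply plus_zero_l|].
      intros j Hj. destruct (Nat.eqb_spec j (S b)); [lia|reflexivity].
    + rewrite IH by lia. destruct (Nat.eqb_spec (S b) p); [lia|]. apply plus_zero_r.
Qed.

Lemma Top_small c m : (m < 3)%nat -> Top c m = 0%C.
Proof. intros Hm. unfold Top. now replace (3 <=? m)%nat with false by (symmetry; apply Nat.leb_gt, Hm). Qed.

Lemma Top_two_preimages c m j : (3 <= m)%nat -> (3 <= j)%nat -> (3 * j + 1 = 2 * m)%nat ->
  Top c m = (c (2 * m)%nat + c j)%C.
Proof.
  intros Hm Hj Hjm. unfold Top. replace (3 <=? m)%nat with true by (symmetry; apply Nat.leb_le, Hm).
  rewrite (sum_n_m_ext_loc _ (fun k => plus (if (k =? 2 * m)%nat then c (2 * m)%nat else zero)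
                                             (if (k =? j)%nat then c j else zero))).
  - rewrite sum_n_m_plus, !sum_n_m_indicator by lia. reflexivity.
  - intros k _. destruct (Nat.eqb_spec (collatz k) m) as [E|E]; rewrite collatz_eq_iff in E;
      destruct (Nat.eqb_spec k (2 * m)); destruct (Nat.eqb_spec k j); try lia; subst;
      now rewrite ?plus_zero_l, ?plus_zero_r.
Qed.

Lemma Top_one_preimage c m : (3 <= m)%nat -> (forall j, 3 <= j -> 3 * j + 1 <> 2 * m)%nat ->
  Top c m = c (2 * m)%nat.
Proof.
  intros Hm Hj. unfold Top. replace (3 <=? m)%nat with true by (symmetry; apply Nat.leb_le, Hm).
  rewrite (sum_n_m_ext_loc _ (fun k => if (k =? 2 * m)%nat then c (2 * m)%nat else zero)).
  - apply sum_n_m_indicator. lia.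
  - intros k Hk. specialize (Hj k).
    destruct (Nat.eqb_spec (collatz k) m) as [E|E]; rewrite collatz_eq_iff in E;
      destruct (Nat.eqb_spec k (2 * m)); try lia; now subst.
Qed.

Lemma Top_preimage_cases m : (3 <= m)%nat ->
  (exists j, (3 <= j)%nat /\ (3 * j + 1 = 2 * m)%nat /\ forall c, Top c m = (c (2 * m)%nat + c j)%C)
  \/ ((forall j, 3 <= j -> 3 * j + 1 <> 2 * m)%nat /\ forall c, Top c m = c (2 * m)%nat).
Proof.
  intros Hm. destruct (classic (exists j, 3 <= j /\ 3 * j + 1 = 2 * m)%nat) as [[j [Hj Hjm]]|Hno].
  - left. exists j. repeat split; auto. intros c. now apply Top_two_preimages.
  - right. assert (Hj : forall j, (3 <= j -> 3 * j + 1 <> 2 * m)%nat) by (intros j ? ?; apply Hno; eauto).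
    split; auto. intros c. now apply Top_one_preimage.
Qed.

Lemma Top_csub c d m : Top (csub c d) m = (Top c m - Top d m)%C.
Proof.
  destruct (Nat.lt_ge_cases m 3) as [Hm|Hm]; [rewrite !Top_small by auto; ring|].
  destruct (Top_preimage_cases m Hm) as [[j [_ [_ HT]]]|[_ HT]]; rewrite !HT; unfold csub; ring.
Qed.

(** * Series of nonnegative reals *)

Lemma ex_series_Rplus (a b : nat -> R) : ex_series a -> ex_series b -> ex_series (fun n => a n + b n).
Proof. exact (@ex_series_plus R_AbsRing R_NormedModule a b). Qed.

Lemma ex_series_Rscal (c : R) (a : nat -> R) : ex_series a -> ex_series (fun n => c * a n).
Proof. exact (@ex_series_scal_l R_AbsRing R_NormedModule c a). Qed.

Lemma ex_series_Rle (a b : nat -> R) : (forall n, 0 <= a n <= b n) -> ex_series b -> ex_series a.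
Proof.
  intros H. apply (@ex_series_le R_AbsRing R_CompleteNormedModule).
  intros n. change (norm (a n)) with (Rabs (a n)). rewrite Rabs_pos_eq; apply H.
Qed.

Lemma sum_n_nonneg (a : nat -> R) N : (forall n, 0 <= a n) -> 0 <= sum_n a N.
Proof.
  intros H. induction N; [rewrite sum_O; auto|]. rewrite sum_Sn. specialize (H (S N)).
  change (plus (sum_n a N) (a (S N))) with (sum_n a N + a (S N)). lra.
Qed.

Lemma sum_n_le_loc (a b : nat -> R) N : (forall n, (n <= N)%nat -> a n <= b n) ->
  sum_n a N <= sum_n b N.
Proof.
  intros H. induction N; [rewrite !sum_O; auto|]. rewrite !sum_Sn. apply Rplus_le_compat; auto.
Qed.

Lemma sum_n_ge_term (a : nat -> R) N k : (forall n, 0 <= a n) -> (k <= N)%nat -> a k <= sum_n a N.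
Proof.
  intros H Hk. induction N.
  - replace k with 0%nat by lia. rewrite sum_O. lra.
  - rewrite sum_Sn. change (plus (sum_n a N) (a (S N))) with (sum_n a N + a (S N)).
    destruct (Nat.eq_dec k (S N)) as [->|Hne].
    + pose proof (sum_n_nonneg a N H). lra.
    + specialize (IHN ltac:(lia)). specialize (H (S N)). lra.
Qed.

Lemma sum_n_indicator (v : R) k N :
  sum_n (fun n => if (n =? k)%nat then v else 0) N = if (k <=? N)%nat then v else 0.
Proof.
  induction N.
  - rewrite sum_O. destruct (Nat.eqb_spec 0 k), (Nat.leb_spec k 0); auto; lia.
  - rewrite sum_Sn, IHN. change plus with Rplus.
    destruct (Nat.eqb_spec (S N) k), (Nat.leb_spec k N), (Nat.leb_spec k (S N)); lra || lia.
Qed.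

Lemma is_series_finite_support (b : nat -> R) N : (forall n, (N < n)%nat -> b n = 0) ->
  is_series b (sum_n b N).
Proof.
  intros H. assert (Hl : is_lim_seq (sum_n b) (sum_n b N)); [|exact Hl].
  apply (is_lim_seq_ext_loc (fun _ => sum_n b N)); [|apply is_lim_seq_const].
  exists N. intros n Hn. rewrite <- (Nat.sub_add N n Hn).
  induction (n - N)%nat as [|k IH]; [reflexivity|].
  rewrite Nat.add_succ_l, sum_Sn, <- IH, H by lia. exact (eq_sym (Rplus_0_r _)).
Qed.

Lemma sum_n_le_Series (a : nat -> R) N : (forall n, 0 <= a n) -> ex_series a -> sum_n a N <= Series a.
Proof.
  intros H Hex. apply is_lim_seq_incr_compare; [exact (Series_correct _ Hex)|].
  intros n. rewrite sum_Sn. specialize (H (S n)). change plus with Rplus. lra.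
Qed.

Lemma ex_series_bounded_sums (b : nat -> R) (B : R) :
  (forall n, 0 <= b n) -> (forall N, sum_n b N <= B) -> ex_series b /\ Series b <= B.
Proof.
  intros H0 HB.
  assert (Hincr : forall n, sum_n b n <= sum_n b (S n)).
  { intros n. rewrite sum_Sn. specialize (H0 (S n)). change plus with Rplus. lra. }
  destruct (ex_finite_lim_seq_incr _ B Hincr HB) as [l Hl].
  assert (Hs : is_series b l) by exact Hl.
  split; [exists l; exact Hs|]. rewrite (is_series_unique _ _ Hs).
  assert (Hle : Rbar_le l B) by (apply (is_lim_seq_le (sum_n b) (fun _ => B)); auto using is_lim_seq_const).
  exact Hle.
Qed.

(* No injectivity of [x] is needed: [b] is dominated at each point of the range of [x]. *)
Lemma ex_series_sparse (x : nat -> nat) (b c : nat -> R) :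
  (forall n, (n <= x n)%nat) -> (forall p, 0 <= b p) -> (forall n, 0 <= c n) -> ex_series c ->
  (forall n, b (x n) <= c n) -> (forall p, (forall n, x n <> p) -> b p = 0) ->
  ex_series b /\ Series b <= Series c.
Proof.
  intros Hx Hb Hc Hex Hbc Hoff. apply ex_series_bounded_sums; auto.
  intros M. set (d := fun n p => if (x n =? p)%nat then c n else 0).
  assert (Hd : forall n p, 0 <= d n p) by (intros n p; unfold d; destruct (_ =? _)%nat; [apply Hc|lra]).
  apply Rle_trans with (sum_n (fun p => sum_n (fun n => d n p) M) M).
  - apply sum_n_le_loc. intros p Hp.
    destruct (classic (exists n, x n = p)) as [[n <-]|Hno].
    + apply Rle_trans with (d n (x n)); [unfold d; rewrite Nat.eqb_refl; auto|].
      apply (sum_n_ge_term (fun k => d k (x n))); auto. specialize (Hx n). lia.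
    + rewrite Hoff by (intros n E; apply Hno; eauto). apply sum_n_nonneg. auto.
  - rewrite sum_n_switch. apply Rle_trans with (sum_n c M); [|apply sum_n_le_Series; auto].
    apply sum_n_le_loc. intros n _. unfold d.
    rewrite (sum_n_ext _ (fun p => if (p =? x n)%nat then c n else 0))
      by (intros p; now rewrite Nat.eqb_sym).
    rewrite sum_n_indicator. destruct (_ <=? _)%nat; [lra|apply Hc].
Qed.

Definition tail (L : nat) (a : nat -> R) : nat -> R := fun n => if (n <? L)%nat then 0 else a n.

Lemma tail_nonneg (a : nat -> R) L n : (forall n, 0 <= a n) -> 0 <= tail L a n.
Proof. intros H. unfold tail. destruct (n <? L)%nat; auto. lra. Qed.

Lemma ex_series_tail (a : nat -> R) L : (forall n, 0 <= a n) -> ex_series a -> ex_series (tail L a).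
Proof.
  intros H. apply ex_series_Rle. intros n. split; [apply tail_nonneg; auto|].
  unfold tail. destruct (n <? L)%nat; auto. lra.
Qed.

Lemma Series_tail_small (a : nat -> R) : (forall n, 0 <= a n) -> ex_series a ->
  forall eps, 0 < eps -> exists L, forall L', (L <= L')%nat -> Series (tail L' a) < eps.
Proof.
  intros H0 Hex eps He.
  assert (Hlim : is_lim_seq (sum_n a) (Series a)) by exact (Series_correct _ Hex).
  destruct (proj2 (is_lim_seq_spec _ _) Hlim (mkposreal eps He)) as [N HN].
  exists (S N). intros L' HL'.
  set (head := fun n => if (n <? L')%nat then a n else 0).
  assert (Hhead : is_series head (sum_n a (pred L'))).
  { replace (sum_n a (pred L')) with (sum_n head (pred L')).
    - apply is_series_finite_support. intros n Hn. unfold head.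
      destruct (Nat.ltb_spec n L'); [lia|reflexivity].
    - apply sum_n_ext_loc. intros n Hn. unfold head. destruct (Nat.ltb_spec n L'); [reflexivity|lia]. }
  assert (Htail : forall n, tail L' a n = a n - head n).
  { intros n. unfold tail, head. destruct (n <? L')%nat; ring. }
  rewrite (Series_ext _ _ Htail), Series_minus by (auto; eexists; eauto).
  rewrite (is_series_unique _ _ Hhead).
  specialize (HN (pred L') ltac:(lia)). simpl in HN. apply Rabs_def2 in HN. lra.
Qed.

(** * The weighted space and the closed span of eigenvectors *)

Definition vzero : nat -> C := fun _ => 0%C.
Definition vadd (a b : nat -> C) : nat -> C := fun n => (a n + b n)%C.
Definition vscal (z : C) (a : nat -> C) : nat -> C := fun n => (z * a n)%C.
Definition ej (j : nat) : nat -> C := fun n => if (n =? j)%nat then 1%C else 0%C.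

Fixpoint csum (f : nat -> C) (N : nat) : C :=
  match N with O => 0%C | S N => (csum f N + f N)%C end.

Definition wpos (omega : nat -> R) : Prop := forall n, (1 <= n)%nat -> 0 < omega n.

Definition wnorm2 (omega : nat -> R) (c : nat -> C) : R := Series (wterm omega c).

Lemma csub_as_vadd a b : csub a b = vadd a (vscal (-1) b).
Proof. apply functional_extensionality. intros n. unfold csub, vadd, vscal. ring. Qed.

Lemma wterm_vscal omega z a n : wterm omega (vscal z a) n = Cmod z ^ 2 * wterm omega a n.
Proof. unfold wterm, vscal. destruct (3 <=? n)%nat; [|ring]. rewrite Cmod_mult. unfold Rdiv. ring. Qed.

Lemma wterm_ej omega j n : (3 <= j)%nat -> wterm omega (ej j) n = if (n =? j)%nat then / omega j else 0.
Proof.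
  intros Hj. unfold wterm, ej. destruct (Nat.eqb_spec n j) as [->|_].
  - replace (3 <=? j)%nat with true by (symmetry; apply Nat.leb_le, Hj). rewrite Cmod_1. unfold Rdiv. ring.
  - destruct (3 <=? n)%nat; [rewrite Cmod_0|]; unfold Rdiv; ring.
Qed.

Lemma wterm_vzero omega n : wterm omega vzero n = 0.
Proof. unfold wterm, vzero. destruct (3 <=? n)%nat; [rewrite Cmod_0|]; unfold Rdiv; ring. Qed.

Lemma is_series_wterm_ej omega j : (3 <= j)%nat -> is_series (wterm omega (ej j)) (/ omega j).
Proof.
  intros Hj. replace (/ omega j) with (sum_n (wterm omega (ej j)) j).
  - apply is_series_finite_support. intros n Hn. rewrite wterm_ej by auto.
    destruct (Nat.eqb_spec n j); [lia|reflexivity].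
  - rewrite (sum_n_ext _ _ _ (fun n => wterm_ej omega j n Hj)), sum_n_indicator, Nat.leb_refl. reflexivity.
Qed.

Lemma wnorm2_vscal omega z a : wnorm2 omega (vscal z a) = Cmod z ^ 2 * wnorm2 omega a.
Proof. unfold wnorm2. rewrite <- Series_scal_l. apply Series_ext. intros n. apply wterm_vscal. Qed.

Lemma wnorm2_vzero omega : wnorm2 omega vzero = 0.
Proof.
  unfold wnorm2. rewrite (Series_ext _ (fun n => 0 * 0)) by (intros; rewrite wterm_vzero; ring).
  rewrite Series_scal_l. ring.
Qed.

Lemma inX_vscal omega z a : inX omega a -> inX omega (vscal z a).
Proof.
  intros [Ha0 Ha]. split.
  - intros n Hn. unfold vscal. rewrite Ha0 by auto. ring.
  - apply (ex_series_ext (fun n => Cmod z ^ 2 * wterm omega a n)).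
    + intros n. symmetry. apply wterm_vscal.
    + apply ex_series_Rscal, Ha.
Qed.

Lemma inX_vzero omega : inX omega vzero.
Proof.
  split; [reflexivity|]. exists (sum_n (wterm omega vzero) 0).
  apply is_series_finite_support. intros n _. apply wterm_vzero.
Qed.

Lemma inX_ej omega j : (3 <= j)%nat -> inX omega (ej j).
Proof.
  intros Hj. split.
  - intros n Hn. unfold ej. destruct (Nat.eqb_spec n j); [lia|reflexivity].
  - eexists. apply is_series_wterm_ej, Hj.
Qed.

Section WeightedSpace.

Variable omega : nat -> R.
Hypothesis omega_pos : wpos omega.

Lemma wterm_nonneg c n : 0 <= wterm omega c n.
Proof.
  unfold wterm. destruct (Nat.leb_spec 3 n); [|lra].
  apply Rdiv_le_0_compat; [apply pow2_ge_0|]. apply omega_pos. lia.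
Qed.

Lemma wterm_vadd_le a b n : wterm omega (vadd a b) n <= 2 * wterm omega a n + 2 * wterm omega b n.
Proof.
  unfold wterm, vadd. destruct (Nat.leb_spec 3 n); [|lra].
  assert (Hw : 0 < / omega n) by (apply Rinv_0_lt_compat, omega_pos; lia).
  unfold Rdiv. rewrite <- !Rmult_assoc, <- Rmult_plus_distr_r.
  apply Rmult_le_compat_r; [lra|].
  pose proof (Cmod_triangle (a n) (b n)) as Htri. pose proof (Cmod_ge_0 (a n + b n)).
  pose proof (Cmod_ge_0 (a n)). pose proof (Cmod_ge_0 (b n)).
  set (x := Cmod (a n)) in *. set (y := Cmod (b n)) in *. set (z := Cmod (a n + b n)) in *.
  assert (z * z <= (x + y) * (x + y)) by (apply Rmult_le_compat; lra).
  pose proof (Rle_0_sqr (x - y)). unfold Rsqr in *. simpl. nra.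
Qed.

Lemma wnorm2_nonneg c : inX omega c -> 0 <= wnorm2 omega c.
Proof.
  intros [_ Hex]. apply Rle_trans with (sum_n (wterm omega c) 0).
  - apply sum_n_nonneg, wterm_nonneg.
  - apply sum_n_le_Series; auto using wterm_nonneg.
Qed.
Lemma inX_vadd a b : inX omega a -> inX omega b -> inX omega (vadd a b).
Proof.
  intros [Ha0 Ha] [Hb0 Hb]. split.
  - intros n Hn. unfold vadd. rewrite Ha0, Hb0 by auto. ring.
  - apply (ex_series_Rle _ (fun n => 2 * wterm omega a n + 2 * wterm omega b n)).
    + intros n. split; [apply wterm_nonneg|apply wterm_vadd_le].
    + apply ex_series_Rplus; apply ex_series_Rscal; auto.
Qed.

Lemma inX_csub a b : inX omega a -> inX omega b -> inX omega (csub a b).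
Proof. intros Ha Hb. rewrite csub_as_vadd. auto using inX_vadd, inX_vscal. Qed.

Lemma wnorm2_vadd_le a b : inX omega a -> inX omega b ->
  wnorm2 omega (vadd a b) <= 2 * wnorm2 omega a + 2 * wnorm2 omega b.
Proof.
  intros [_ Ha] [_ Hb]. unfold wnorm2.
  rewrite <- !Series_scal_l, <- Series_plus by (apply ex_series_Rscal; auto).
  apply Series_le; [|apply ex_series_Rplus; apply ex_series_Rscal; auto].
  intros n. split; [apply wterm_nonneg|apply wterm_vadd_le].
Qed.

Lemma wnorm2_csub_le a b : inX omega a -> inX omega b ->
  wnorm2 omega (csub a b) <= 2 * wnorm2 omega a + 2 * wnorm2 omega b.
Proof.
  intros Ha Hb. rewrite csub_as_vadd.
  eapply Rle_trans; [apply wnorm2_vadd_le; auto using inX_vscal|].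
  rewrite wnorm2_vscal, Cmod_R, Rabs_left by lra. lra.
Qed.

End WeightedSpace.

Definition eigcomb (l : list (C * C * (nat -> C))) (n : nat) : C :=
  fold_right (fun t acc => (fst (fst t) * snd t n + acc)%C) 0%C l.

Lemma eigcomb_app l1 l2 n : eigcomb (l1 ++ l2) n = (eigcomb l1 n + eigcomb l2 n)%C.
Proof. induction l1 as [|t l IH]; simpl; [ring|]. unfold eigcomb in *. simpl. rewrite IH. ring. Qed.

Lemma eigcomb_scal z l n :
  eigcomb (map (fun t => ((z * fst (fst t))%C, snd (fst t), snd t)) l) n = (z * eigcomb l n)%C.
Proof. induction l as [|t l IH]; simpl; [ring|]. unfold eigcomb in *. simpl. rewrite IH. ring. Qed.

Definition in_eigclosure (omega : nat -> R) (P : C -> Prop) (h : nat -> C) : Prop :=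
  inX omega h /\ forall eps, 0 < eps -> exists g, in_eigspan omega P g /\ wnorm2 omega (csub h g) < eps.

Section EigenSpan.

Variable omega : nat -> R.
Hypothesis omega_pos : wpos omega.
Variable P : C -> Prop.

Lemma eigspan_vzero : in_eigspan omega P vzero.
Proof. exists nil. split; [intros t []|reflexivity]. Qed.

Lemma eigspan_eigvec mu g : P mu -> eigvec omega mu g -> in_eigspan omega P g.
Proof.
  intros HP Hg. exists ((RtoC 1, mu, g) :: nil). split.
  - intros t [<-|[]]. simpl. auto.
  - intros n. simpl. ring.
Qed.

Lemma eigspan_vadd f g : in_eigspan omega P f -> in_eigspan omega P g -> in_eigspan omega P (vadd f g).
Proof.
  intros [l1 [H1 E1]] [l2 [H2 E2]]. exists (l1 ++ l2). split.
  - intros t Ht. apply in_app_or in Ht. destruct Ht; auto.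
  - intros n. fold (eigcomb (l1 ++ l2) n). rewrite eigcomb_app. unfold vadd. now rewrite E1, E2.
Qed.

Lemma eigspan_vscal z f : in_eigspan omega P f -> in_eigspan omega P (vscal z f).
Proof.
  intros [l [H E]]. exists (map (fun t => ((z * fst (fst t))%C, snd (fst t), snd t)) l). split.
  - intros t Ht. apply in_map_iff in Ht. destruct Ht as [t0 [<- Ht0]]. simpl. auto.
  - intros n. fold (eigcomb (map (fun t => ((z * fst (fst t))%C, snd (fst t), snd t)) l) n).
    rewrite eigcomb_scal. unfold vscal. now rewrite E.
Qed.

Lemma eigspan_csum (h : nat -> nat -> C) N : (forall t, (t < N)%nat -> in_eigspan omega P (h t)) ->
  in_eigspan omega P (fun p => csum (fun t => h t p) N).
Proof.
  induction N as [|N IH]; intros H; [apply eigspan_vzero|].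
  apply (eigspan_vadd (fun p => csum (fun t => h t p) N) (h N)); auto.
Qed.

Lemma inX_of_eigspan f : in_eigspan omega P f -> inX omega f.
Proof.
  intros [l [Hl E]]. replace f with (eigcomb l) by (apply functional_extensionality; auto).
  clear E. induction l as [|t l IH]; [apply inX_vzero|].
  apply (inX_vadd omega omega_pos (vscal (fst (fst t)) (snd t)) (eigcomb l)).
  - apply inX_vscal, Hl. now left.
  - apply IH. intros t' Ht'. apply Hl. now right.
Qed.

Lemma eigclosure_of_eigspan g : in_eigspan omega P g -> in_eigclosure omega P g.
Proof.
  intros Hg. split; [apply inX_of_eigspan, Hg|]. intros eps He. exists g. split; auto.
  replace (csub g g) with vzero by (apply functional_extensionality; intros n; unfold csub, vzero; ring).
  now rewrite wnorm2_vzero.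
Qed.

Lemma eigclosure_of_approx h : inX omega h ->
  (forall eps, 0 < eps -> exists h', in_eigclosure omega P h' /\ wnorm2 omega (csub h h') < eps) ->
  in_eigclosure omega P h.
Proof.
  intros Hh Happ. split; auto. intros eps He.
  destruct (Happ (eps / 4)) as [h' [[Hh' Hclose] N1]]; [lra|].
  destruct (Hclose (eps / 4)) as [g [Hg N2]]; [lra|].
  exists g. split; auto.
  replace (csub h g) with (vadd (csub h h') (csub h' g))
    by (apply functional_extensionality; intros n; unfold vadd, csub; ring).
  pose proof (inX_of_eigspan g Hg).
  eapply Rle_lt_trans; [apply wnorm2_vadd_le; auto using inX_csub|]. lra.
Qed.

Lemma eigclosure_vadd a b : in_eigclosure omega P a -> in_eigclosure omega P b ->
  in_eigclosure omega P (vadd a b).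
Proof.
  intros [Ha Hca] [Hb Hcb]. split; [apply inX_vadd; auto|]. intros eps He.
  destruct (Hca (eps / 4)) as [g1 [Hg1 N1]]; [lra|].
  destruct (Hcb (eps / 4)) as [g2 [Hg2 N2]]; [lra|].
  exists (vadd g1 g2). split; [apply eigspan_vadd; auto|].
  replace (csub (vadd a b) (vadd g1 g2)) with (vadd (csub a g1) (csub b g2))
    by (apply functional_extensionality; intros n; unfold vadd, csub; ring).
  pose proof (inX_of_eigspan g1 Hg1). pose proof (inX_of_eigspan g2 Hg2).
  eapply Rle_lt_trans; [apply wnorm2_vadd_le; auto using inX_csub|]. lra.
Qed.

Lemma eigclosure_vscal z a : in_eigclosure omega P a -> in_eigclosure omega P (vscal z a).
Proof.
  intros [Ha Hca]. split; [apply inX_vscal; auto|]. intros eps He.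
  set (K := Cmod z ^ 2 + 1). assert (HK : 0 < K) by (pose proof (pow2_ge_0 (Cmod z)); unfold K; lra).
  destruct (Hca (eps / K)) as [g [Hg N]]; [apply Rdiv_lt_0_compat; auto|].
  exists (vscal z g). split; [apply eigspan_vscal; auto|].
  replace (csub (vscal z a) (vscal z g)) with (vscal z (csub a g))
    by (apply functional_extensionality; intros n; unfold vscal, csub; ring).
  rewrite wnorm2_vscal.
  assert (0 <= wnorm2 omega (csub a g)) by auto using wnorm2_nonneg, inX_csub, inX_of_eigspan.
  apply (Rmult_lt_compat_l K) in N; auto. replace (K * (eps / K)) with eps in N by (field; lra).
  unfold K in *. nra.
Qed.

Lemma eigclosure_csub a b : in_eigclosure omega P a -> in_eigclosure omega P b ->
  in_eigclosure omega P (csub a b).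
Proof. intros Ha Hb. rewrite csub_as_vadd. auto using eigclosure_vadd, eigclosure_vscal. Qed.

End EigenSpan.

(** * Eigenvectors supported on dyadic rays *)

Lemma csum_zero (f : nat -> C) N : (forall n, (n < N)%nat -> f n = 0%C) -> csum f N = 0%C.
Proof. induction N as [|N IH]; intros H; simpl; auto. rewrite IH, H by auto. ring. Qed.

Lemma csum_single (f : nat -> C) N k : (k < N)%nat ->
  (forall n, (n < N)%nat -> n <> k -> f n = 0%C) -> csum f N = f k.
Proof.
  induction N as [|N IH]; intros Hk H; [lia|]. simpl.
  destruct (Nat.eq_dec k N) as [->|Hne].
  - rewrite csum_zero; [ring|]. intros n Hn. apply H; lia.
  - rewrite IH, (H N) by (auto; lia). ring.
Qed.

Lemma pow2_gt n : (n < 2 ^ n)%nat.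
Proof. induction n; simpl; lia. Qed.

Lemma pow2_pos n : (1 <= 2 ^ n)%nat.
Proof. pose proof (pow2_gt n). lia. Qed.

Lemma dyadic_inj a n k : (1 <= a)%nat -> (a * 2 ^ n = a * 2 ^ k)%nat -> n = k.
Proof. intros Ha H. apply (Nat.pow_inj_r 2); [lia|]. apply (Nat.mul_cancel_l _ _ a); lia. Qed.

(* [dyadic_geom a mu] is [sum_n mu^n e_(a 2^n)]; as [a 2^n > n], only [n <= p] can reach index [p]. *)
Definition dyadic_geom (a : nat) (mu : C) : nat -> C :=
  fun p => csum (fun n => if (p =? a * 2 ^ n)%nat then (mu ^ n)%C else 0%C) (S p).

Lemma dyadic_geom_at a mu n : (1 <= a)%nat -> dyadic_geom a mu (a * 2 ^ n)%nat = (mu ^ n)%C.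
Proof.
  intros Ha. unfold dyadic_geom. rewrite (csum_single _ _ n).
  - now rewrite Nat.eqb_refl.
  - pose proof (pow2_gt n). nia.
  - intros k _ Hk. destruct (Nat.eqb_spec (a * 2 ^ n) (a * 2 ^ k)) as [E|]; auto.
    apply dyadic_inj in E; [lia|auto].
Qed.

Lemma dyadic_geom_base a mu : (1 <= a)%nat -> dyadic_geom a mu a = 1%C.
Proof. intros Ha. pose proof (dyadic_geom_at a mu 0 Ha) as H. now rewrite Nat.pow_0_r, Nat.mul_1_r in H. Qed.

Lemma dyadic_geom_off a mu p : (forall n, p <> (a * 2 ^ n)%nat) -> dyadic_geom a mu p = 0%C.
Proof.
  intros H. apply csum_zero. intros n _. destruct (Nat.eqb_spec p (a * 2 ^ n)); auto.
  exfalso. eapply H; eauto.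
Qed.

Lemma dyadic_geom_lt a mu p : (p < a)%nat -> dyadic_geom a mu p = 0%C.
Proof. intros Hp. apply dyadic_geom_off. intros n E. pose proof (pow2_pos n). nia. Qed.

Lemma dyadic_geom_double a mu m : (1 <= a)%nat ->
  dyadic_geom a mu (2 * m) = (mu * dyadic_geom a mu m + if (2 * m =? a)%nat then 1 else 0)%C.
Proof.
  intros Ha. destruct (Nat.eqb_spec (2 * m) a) as [E|Hne].
  - rewrite E, dyadic_geom_base, (dyadic_geom_lt a mu m) by lia. ring.
  - destruct (classic (exists n, m = a * 2 ^ n)%nat) as [[n ->]|Hno].
    + replace (2 * (a * 2 ^ n))%nat with (a * 2 ^ S n)%nat by (simpl; lia).
      rewrite !dyadic_geom_at by auto. simpl. ring.
    + rewrite !dyadic_geom_off; [ring| |].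
      * intros n E. apply Hno. eauto.
      * intros [|n] E; simpl in E; [lia|]. apply Hno. exists n. lia.
Qed.

Lemma dyadic_geom_odd a mu t : (1 <= a)%nat ->
  dyadic_geom a mu (2 * t + 1) = if (2 * t + 1 =? a)%nat then 1%C else 0%C.
Proof.
  intros Ha. destruct (Nat.eqb_spec (2 * t + 1) a) as [<-|Hne].
  - apply dyadic_geom_base. lia.
  - apply dyadic_geom_off. intros [|n] E; simpl in E; lia.
Qed.

Lemma Top_dyadic_geom a mu m : (3 <= a)%nat ->
  Top (dyadic_geom a mu) m =
  (mu * dyadic_geom a mu m + if (3 <=? m)%nat then ej (collatz a) m else 0)%C.
Proof.
  intros Ha. destruct (Nat.leb_spec 3 m) as [Hm|Hm].
  2: { rewrite Top_small, dyadic_geom_lt by lia. ring. }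
  unfold ej. rewrite Nat.eqb_sym.
  destruct (Top_preimage_cases m Hm) as [[j [Hj [Hjm HT]]]|[Hno HT]]; rewrite HT, dyadic_geom_double by lia.
  - destruct (Nat.Even_or_Odd j) as [[t ->]|[t ->]]; [lia|]. rewrite dyadic_geom_odd by lia.
    destruct (Nat.eqb_spec (collatz a) m) as [E|E]; rewrite collatz_eq_iff in E;
      destruct (Nat.eqb_spec (2 * m) a), (Nat.eqb_spec (2 * t + 1) a); try lia; ring.
  - specialize (Hno a).
    destruct (Nat.eqb_spec (collatz a) m) as [E|E]; rewrite collatz_eq_iff in E;
      destruct (Nat.eqb_spec (2 * m) a); try lia; ring.
Qed.

Definition dyadic_weight (omega : nat -> R) (r : R) (a : nat) : nat -> R :=
  fun n => (r ^ n) ^ 2 / omega (a * 2 ^ n)%nat.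

Section DyadicEigenvectors.

Variable omega : nat -> R.
Hypothesis omega_pos : wpos omega.

Lemma dyadic_weight_nonneg r a n : (1 <= a)%nat -> 0 <= dyadic_weight omega r a n.
Proof.
  intros Ha. unfold dyadic_weight. apply Rdiv_le_0_compat; [apply pow2_ge_0|].
  apply omega_pos. pose proof (pow2_pos n). nia.
Qed.

Lemma inX_dyadic_geom a mu : (3 <= a)%nat -> ex_series (dyadic_weight omega (Cmod mu) a) ->
  inX omega (dyadic_geom a mu).
Proof.
  intros Ha Hb. split; [intros n Hn; apply dyadic_geom_lt; lia|].
  apply (ex_series_sparse (fun n => a * 2 ^ n)%nat _ (dyadic_weight omega (Cmod mu) a)); auto.
  - intros n. pose proof (pow2_gt n). nia.
  - apply wterm_nonneg, omega_pos.
  - intros n. apply dyadic_weight_nonneg. lia.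
  - intros n. unfold wterm, dyadic_weight. pose proof (pow2_pos n).
    replace (3 <=? a * 2 ^ n)%nat with true by (symmetry; apply Nat.leb_le; nia).
    rewrite dyadic_geom_at, Cmod_pow by lia. lra.
  - intros p Hp. unfold wterm. rewrite dyadic_geom_off, Cmod_0 by auto.
    destruct (3 <=? p)%nat; unfold Rdiv; ring.
Qed.

Lemma eigvec_dyadic_geom a mu : (3 <= a)%nat -> (collatz a < 3)%nat ->
  ex_series (dyadic_weight omega (Cmod mu) a) -> eigvec omega mu (dyadic_geom a mu).
Proof.
  intros Ha Hca Hb. split; [apply inX_dyadic_geom; auto|]. intros m.
  rewrite Top_dyadic_geom by auto. unfold ej.
  destruct (Nat.leb_spec 3 m), (Nat.eqb_spec m (collatz a)); try lia; ring.
Qed.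

Lemma eigvec_dyadic_geom_sub a b mu : (3 <= a)%nat -> (3 <= b)%nat -> collatz a = collatz b ->
  ex_series (dyadic_weight omega (Cmod mu) a) -> ex_series (dyadic_weight omega (Cmod mu) b) ->
  eigvec omega mu (csub (dyadic_geom a mu) (dyadic_geom b mu)).
Proof.
  intros Ha Hb Hab Hwa Hwb. split; [apply inX_csub; auto using inX_dyadic_geom|]. intros m.
  rewrite Top_csub, !Top_dyadic_geom, Hab by auto. unfold csub. ring.
Qed.

End DyadicEigenvectors.

(** * Roots of unity and the coefficient filter *)

Definition zeta (q : nat) : C := (cos (2 * PI / INR q), sin (2 * PI / INR q)).

Lemma zeta_pow q N : (zeta q ^ N)%C = (cos (2 * PI / INR q * INR N), sin (2 * PI / INR q * INR N)).
Proof.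
  induction N as [|N IH].
  - simpl. rewrite Rmult_0_r, cos_0, sin_0. reflexivity.
  - rewrite Cpow_S, IH, S_INR, Rmult_plus_distr_l, Rmult_1_r, (Rplus_comm _ (2 * PI / INR q)).
    rewrite cos_plus, sin_plus. unfold zeta, Cmult. cbn [fst snd]. f_equal; ring.
Qed.

Lemma Cmod_zeta q : Cmod (zeta q) = 1.
Proof.
  unfold zeta, Cmod. cbn [fst snd]. rewrite <- sqrt_1. f_equal.
  rewrite <- (sin2_cos2 (2 * PI / INR q)). unfold Rsqr. ring.
Qed.

Lemma zeta_pow_mul_self q j : (1 <= q)%nat -> (zeta q ^ (q * j))%C = 1%C.
Proof.
  intros Hq. rewrite zeta_pow, mult_INR.
  assert (INR q <> 0) by (apply not_0_INR; lia).
  replace (2 * PI / INR q * (INR q * INR j)) with (0 + 2 * INR j * PI) by (field; auto).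
  rewrite cos_period, sin_period, cos_0, sin_0. reflexivity.
Qed.

Lemma cis_neq_1 x : 0 < x < 2 * PI -> ((cos x, sin x) : C) <> 1%C.
Proof.
  intros [H1 H2] E. injection E as Ec Es.
  destruct (Rlt_or_le x PI) as [Hx|Hx].
  - pose proof (sin_gt_0 x H1 Hx). lra.
  - destruct (Req_dec x PI) as [->|Hne].
    + rewrite cos_PI in Ec. lra.
    + replace x with ((x - PI) + PI) in Es by ring. rewrite neg_sin in Es.
      pose proof (sin_gt_0 (x - PI) ltac:(lra) ltac:(lra)). lra.
Qed.

Lemma zeta_pow_neq_1 q k : (0 < k < q)%nat -> (zeta q ^ k)%C <> 1%C.
Proof.
  intros Hk. rewrite zeta_pow. apply cis_neq_1.
  assert (0 < INR k < INR q) by (split; [apply (lt_INR 0)|apply lt_INR]; lia).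
  pose proof PI_RGT_0.
  replace (2 * PI / INR q * INR k) with (2 * PI * (INR k / INR q)) by (field; lra).
  assert (0 < INR k / INR q) by (apply Rdiv_lt_0_compat; lra).
  assert (INR k / INR q < 1).
  { apply (Rmult_lt_reg_r (INR q)); [lra|]. unfold Rdiv. rewrite Rmult_assoc, Rinv_l; lra. }
  nra.
Qed.

Lemma csum_geom (z : C) q : ((z - 1) * csum (fun t => z ^ t) q = z ^ q - 1)%C.
Proof. induction q as [|q IH]; simpl; [ring|]. rewrite Cmult_plus_distr_l, IH. ring. Qed.

Lemma csum_roots_of_unity q N : (1 <= q)%nat ->
  csum (fun t => (zeta q ^ N) ^ t)%C q = if (N mod q =? 0)%nat then RtoC (INR q) else 0%C.
Proof.
  intros Hq.
  assert (HN : (zeta q ^ N = zeta q ^ (N mod q))%C).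
  { rewrite (Nat.div_mod_eq N q) at 1. rewrite Cpow_add_r, zeta_pow_mul_self by auto. ring. }
  rewrite HN. destruct (Nat.eqb_spec (N mod q) 0) as [E|E].
  - rewrite E. change (zeta q ^ 0)%C with (RtoC 1). clear.
    induction q as [|q IH]; simpl csum; [reflexivity|].
    rewrite IH, Cpow_1_l, S_INR, RtoC_plus. ring.
  - set (z := (zeta q ^ (N mod q))%C).
    assert (Hz1 : (z - 1 <> 0)%C).
    { intros H. apply (zeta_pow_neq_1 q (N mod q)); [pose proof (Nat.mod_upper_bound N q); lia|].
      fold z. rewrite <- (Cplus_0_l 1), <- H. ring. }
    assert (Hzq : (z ^ q = 1)%C)
      by (unfold z; rewrite <- Cpow_mult_r, Nat.mul_comm; apply zeta_pow_mul_self, Hq).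
    pose proof (csum_geom z q) as Hg. rewrite Hzq in Hg.
    transitivity (/ (z - 1) * ((z - 1) * csum (fun t => z ^ t) q))%C; [field; auto|].
    rewrite Hg. ring.
Qed.

Lemma csum_scal (z : C) (f : nat -> C) N : csum (fun t => z * f t)%C N = (z * csum f N)%C.
Proof. induction N as [|N IH]; simpl; [ring|]. rewrite IH. ring. Qed.

Lemma csum_sub (f g : nat -> C) N : csum (fun t => f t - g t)%C N = (csum f N - csum g N)%C.
Proof. induction N as [|N IH]; simpl; [ring|]. rewrite IH. ring. Qed.

Lemma RtoC_neq_0 x : x <> 0 -> RtoC x <> 0%C.
Proof. intros H E. apply H. exact (RtoC_inj x 0 E). Qed.

Definition circle_pt (q : nat) (r : R) (t : nat) : C := (zeta q ^ t * RtoC r)%C.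

(* Averaging over the points [r zeta_q^t] with the weights [zeta_q^(-m t) / (q r^m)] extracts the
   coefficient of [mu^m] in [V mu], aliased with those of [mu^(m + j q)]; the exponent [-m t] is
   written [(q - m) t] to stay in [nat]. *)
Definition coeff_filter (V : C -> nat -> C) (q m : nat) (r : R) : nat -> C :=
  fun p => csum (fun t => (zeta q ^ (q - m)) ^ t / (RtoC (INR q) * RtoC r ^ m) * V (circle_pt q r t) p)%C q.

Lemma Cmod_circle_pt q r t : 0 <= r -> Cmod (circle_pt q r t) = r.
Proof.
  intros Hr. unfold circle_pt. rewrite Cmod_mult, Cmod_pow, Cmod_zeta, pow1, Cmod_R, Rabs_pos_eq; lra.
Qed.

Lemma coeff_filter_dyadic_geom_at a q m r n : (1 <= a)%nat -> (1 <= q)%nat -> r <> 0 ->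
  coeff_filter (dyadic_geom a) q m r (a * 2 ^ n)%nat =
  if ((q - m + n) mod q =? 0)%nat then (RtoC r ^ n / RtoC r ^ m)%C else 0%C.
Proof.
  intros Ha Hq Hr.
  assert (Hq0 : RtoC (INR q) <> 0%C) by (apply RtoC_neq_0, not_0_INR; lia).
  assert (Hrm : (RtoC r ^ m)%C <> 0%C) by (apply Cpow_nz, RtoC_neq_0, Hr).
  unfold coeff_filter.
  transitivity (csum (fun t => RtoC r ^ n / (RtoC (INR q) * RtoC r ^ m) * (zeta q ^ (q - m + n)) ^ t)%C q).
  - f_equal. apply functional_extensionality. intros t.
    rewrite dyadic_geom_at by auto. unfold circle_pt.
    rewrite Cpow_mult_l, <- !Cpow_mult_r, (Nat.mul_comm t n), Nat.mul_add_distr_r, Cpow_add_r.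
    field. auto.
  - rewrite csum_scal, csum_roots_of_unity by auto.
    destruct (_ =? 0)%nat; [field; auto|ring].
Qed.

Lemma coeff_filter_dyadic_geom_off a q m r p : (forall n, p <> (a * 2 ^ n)%nat) ->
  coeff_filter (dyadic_geom a) q m r p = 0%C.
Proof.
  intros H. apply csum_zero. intros t _. rewrite dyadic_geom_off by auto. ring.
Qed.

Lemma mod_alias_eqb m q n : (m < q)%nat -> (n < m + q)%nat ->
  ((q - m + n) mod q =? 0)%nat = (n =? m)%nat.
Proof.
  intros Hm Hn. destruct (Nat.lt_ge_cases n m) as [Hlt|Hge].
  - rewrite Nat.mod_small by lia. destruct (Nat.eqb_spec n m); [lia|]. apply Nat.eqb_neq. lia.
  - replace (q - m + n)%nat with ((n - m) + 1 * q)%nat by lia.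
    rewrite Nat.Div0.mod_add, Nat.mod_small by lia.
    destruct (Nat.eqb_spec n m), (Nat.eqb_spec (n - m) 0); auto; lia.
Qed.

Lemma coeff_filter_csub V W q m r :
  coeff_filter (fun mu => csub (V mu) (W mu)) q m r = csub (coeff_filter V q m r) (coeff_filter W q m r).
Proof.
  apply functional_extensionality. intros p. unfold coeff_filter, csub. rewrite <- csum_sub.
  f_equal. apply functional_extensionality. intros t. ring.
Qed.

Lemma eigspan_coeff_filter omega P V q m r : 0 <= r ->
  (forall mu, Cmod mu = r -> P mu /\ eigvec omega mu (V mu)) ->
  in_eigspan omega P (coeff_filter V q m r).
Proof.
  intros Hr HV. apply eigspan_csum. intros t _. apply eigspan_vscal.
  destruct (HV (circle_pt q r t)) as [HP He]; [apply Cmod_circle_pt, Hr|].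
  exact (eigspan_eigvec omega P _ _ HP He).
Qed.

Definition filter_error (a q m : nat) (r : R) : nat -> C :=
  csub (ej (a * 2 ^ m)) (coeff_filter (dyadic_geom a) q m r).

Lemma filter_error_off a q m r p : (forall n, p <> (a * 2 ^ n)%nat) -> filter_error a q m r p = 0%C.
Proof.
  intros H. unfold filter_error, csub, ej. rewrite coeff_filter_dyadic_geom_off by auto.
  destruct (Nat.eqb_spec p (a * 2 ^ m)); [exfalso; eapply H; eauto|ring].
Qed.

Lemma filter_error_dyadic a q m r n : (1 <= a)%nat -> 0 < r -> (m < q)%nat ->
  Cmod (filter_error a q m r (a * 2 ^ n)%nat) ^ 2 <= / (r ^ m) ^ 2 * tail (m + q) (fun k => (r ^ k) ^ 2) n.
Proof.
  intros Ha Hr Hmq. pose proof (pow_lt r m Hr) as Hrm.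
  assert (Hej : ej (a * 2 ^ m) (a * 2 ^ n) = if (n =? m)%nat then 1%C else 0%C).
  { unfold ej. destruct (Nat.eqb_spec n m) as [->|Hne]; [now rewrite Nat.eqb_refl|].
    destruct (Nat.eqb_spec (a * 2 ^ n) (a * 2 ^ m)) as [E|]; [apply dyadic_inj in E; lia|reflexivity]. }
  unfold filter_error, csub, tail. rewrite Hej, coeff_filter_dyadic_geom_at by (lia || lra).
  destruct (Nat.ltb_spec n (m + q)).
  - rewrite mod_alias_eqb by auto. destruct (Nat.eqb_spec n m) as [->|].
    + replace (1 - RtoC r ^ m / RtoC r ^ m)%C with (RtoC 0)
        by (field; apply Cpow_nz, RtoC_neq_0; lra).
      rewrite Cmod_0. lra.
    + replace (0 - 0)%C with (RtoC 0) by ring. rewrite Cmod_0. lra.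
  - destruct (Nat.eqb_spec n m); [lia|].
    destruct (_ =? 0)%nat.
    + replace (0 - RtoC r ^ n / RtoC r ^ m)%C with (- (RtoC r ^ n / RtoC r ^ m))%C by ring.
      rewrite Cmod_opp, Cmod_div, !Cmod_pow, Cmod_R, Rabs_pos_eq
        by (lra || apply Cpow_nz, RtoC_neq_0; lra).
      apply Req_le. field. lra.
    + replace (0 - 0)%C with (RtoC 0) by ring. rewrite Cmod_0.
      replace (0 ^ 2) with 0 by ring.
      apply Rmult_le_pos; [left; apply Rinv_0_lt_compat, pow_lt, Hrm|apply pow2_ge_0].
Qed.

Lemma odd_part a : (1 <= a)%nat -> exists k n, Nat.odd k = true /\ a = (k * 2 ^ n)%nat.
Proof.
  induction a as [a IH] using lt_wf_ind. intros Ha.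
  destruct (Nat.Even_or_Odd a) as [[b ->]|[b ->]].
  - destruct (IH b) as [k [n [Hk ->]]]; try lia. exists k, (S n). split; auto. simpl. lia.
  - exists (2 * b + 1)%nat, 0%nat. split; [apply Nat.odd_spec; exists b; auto|]. simpl. lia.
Qed.

Section DyadicUnitsInClosure.

Variable omega : nat -> R.
Hypothesis omega_pos : wpos omega.

Lemma filter_error_wnorm2 a q m r : (3 <= a)%nat -> 0 < r -> (m < q)%nat ->
  ex_series (dyadic_weight omega r a) ->
  inX omega (filter_error a q m r) /\
  wnorm2 omega (filter_error a q m r) <= / (r ^ m) ^ 2 * Series (tail (m + q) (dyadic_weight omega r a)).
Proof.
  intros Ha Hr Hmq Hw.
  assert (Hw0 : forall n, 0 <= dyadic_weight omega r a n) by (intros; apply dyadic_weight_nonneg; auto; lia).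
  assert (Hrm : 0 < / (r ^ m) ^ 2) by (apply Rinv_0_lt_compat, pow_lt, pow_lt, Hr).
  unfold wnorm2. rewrite <- Series_scal_l.
  destruct (ex_series_sparse (fun n => a * 2 ^ n)%nat (wterm omega (filter_error a q m r))
              (fun n => / (r ^ m) ^ 2 * tail (m + q) (dyadic_weight omega r a) n)) as [Hex Hle].
  - intros n. pose proof (pow2_gt n). nia.
  - apply wterm_nonneg, omega_pos.
  - intros n. apply Rmult_le_pos; [lra|apply tail_nonneg; auto].
  - apply ex_series_Rscal, ex_series_tail; auto.
  - intros n. pose proof (pow2_pos n).
    assert (Hwn : 0 < / omega (a * 2 ^ n)%nat) by (apply Rinv_0_lt_compat, omega_pos; nia).
    unfold wterm. replace (3 <=? a * 2 ^ n)%nat with true by (symmetry; apply Nat.leb_le; nia).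
    replace (/ (r ^ m) ^ 2 * tail (m + q) (dyadic_weight omega r a) n)
      with (/ (r ^ m) ^ 2 * tail (m + q) (fun k => (r ^ k) ^ 2) n * / omega (a * 2 ^ n)%nat)
      by (unfold tail, dyadic_weight; destruct (n <? m + q)%nat; unfold Rdiv; ring).
    apply Rmult_le_compat_r; [lra|]. apply filter_error_dyadic; auto. lia.
  - intros p Hp. unfold wterm. rewrite filter_error_off, Cmod_0 by auto.
    destruct (3 <=? p)%nat; unfold Rdiv; ring.
  - split; auto. split; auto.
    intros n Hn. unfold filter_error, csub, ej, coeff_filter.
    destruct (Nat.eqb_spec n (a * 2 ^ m)) as [E|]; [pose proof (pow2_pos m); nia|].
    rewrite csum_zero; [ring|]. intros t _. rewrite dyadic_geom_lt by lia. ring.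
Qed.

Lemma filter_error_small a m r : (3 <= a)%nat -> 0 < r -> ex_series (dyadic_weight omega r a) ->
  forall eps, 0 < eps -> exists q0, forall q, (q0 <= q)%nat ->
    inX omega (filter_error a q m r) /\ wnorm2 omega (filter_error a q m r) < eps.
Proof.
  intros Ha Hr Hw eps He.
  assert (Hrm : 0 < (r ^ m) ^ 2) by (apply pow_lt, pow_lt, Hr).
  destruct (Series_tail_small (dyadic_weight omega r a)) with (eps := eps * (r ^ m) ^ 2) as [L HL];
    auto using Rmult_lt_0_compat.
  { intros n. apply dyadic_weight_nonneg; auto. lia. }
  exists (Nat.max L (S m)). intros q Hq.
  destruct (filter_error_wnorm2 a q m r) as [HX Hle]; auto; [lia|].
  split; auto. eapply Rle_lt_trans; [exact Hle|].
  apply (Rmult_lt_reg_l ((r ^ m) ^ 2)); auto.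
  rewrite <- Rmult_assoc, Rinv_r, Rmult_1_l by lra. rewrite Rmult_comm. apply HL. lia.
Qed.

Variable r : R.
Hypothesis r_pos : 0 < r.
Hypothesis dyadic_weight_summable : forall a, (3 <= a)%nat -> ex_series (dyadic_weight omega r a).
Variable P : C -> Prop.
Hypothesis P_circle : forall mu, Cmod mu = r -> P mu.

Lemma eigclosure_dyadic_unit a m : (3 <= a)%nat -> (collatz a < 3)%nat ->
  in_eigclosure omega P (ej (a * 2 ^ m)).
Proof.
  intros Ha Hca. split; [apply inX_ej; pose proof (pow2_pos m); nia|]. intros eps He.
  destruct (filter_error_small a m r Ha r_pos (dyadic_weight_summable a Ha) eps He) as [q0 Hq0].
  exists (coeff_filter (dyadic_geom a) q0 m r). split.
  - apply eigspan_coeff_filter; [lra|]. intros mu Hmu. split; [auto|].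
    apply eigvec_dyadic_geom; auto. rewrite Hmu. auto.
  - apply (Hq0 q0). lia.
Qed.

Lemma eigclosure_dyadic_unit_sub a b m : (3 <= a)%nat -> (3 <= b)%nat -> collatz a = collatz b ->
  in_eigclosure omega P (csub (ej (a * 2 ^ m)) (ej (b * 2 ^ m))).
Proof.
  intros Ha Hb Hab. pose proof (pow2_pos m).
  split; [apply inX_csub; auto; apply inX_ej; nia|]. intros eps He.
  destruct (filter_error_small a m r Ha r_pos (dyadic_weight_summable a Ha) (eps / 4)) as [qa Hqa]; [lra|].
  destruct (filter_error_small b m r Hb r_pos (dyadic_weight_summable b Hb) (eps / 4)) as [qb Hqb]; [lra|].
  set (q := Nat.max qa qb).
  exists (coeff_filter (fun mu => csub (dyadic_geom a mu) (dyadic_geom b mu)) q m r). split.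
  - apply eigspan_coeff_filter; [lra|]. intros mu Hmu. split; [auto|].
    apply eigvec_dyadic_geom_sub; auto; rewrite Hmu; auto.
  - replace (csub _ _) with (csub (filter_error a q m r) (filter_error b q m r)).
    + destruct (Hqa q) as [HXa Ha']; [lia|]. destruct (Hqb q) as [HXb Hb']; [lia|].
      eapply Rle_lt_trans; [apply wnorm2_csub_le; auto|]. lra.
    + rewrite coeff_filter_csub. apply functional_extensionality. intros n.
      unfold filter_error, csub. ring.
Qed.

Lemma eigclosure_unit_step a : (3 <= a)%nat ->
  exists b, (a < b)%nat /\ in_eigclosure omega P (csub (ej a) (ej b)).
Proof.
  intros Ha. destruct (odd_part a) as [k [n [Hk ->]]]; [lia|].
  pose proof (pow2_pos n). apply Nat.odd_spec in Hk. destruct Hk as [s ->].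
  destruct (Nat.eq_dec s 0) as [->|Hs].
  - destruct n as [|[|n]]; simpl in Ha; try lia.
    exists (4 * 2 ^ S n)%nat. split; [simpl; lia|].
    replace ((2 * 0 + 1) * 2 ^ S (S n))%nat with (4 * 2 ^ n)%nat by (simpl; lia).
    apply eigclosure_csub; auto; apply eigclosure_dyadic_unit; auto.
  - exists ((6 * s + 4) * 2 ^ n)%nat. split; [nia|].
    apply eigclosure_dyadic_unit_sub; try lia.
    replace (6 * s + 4)%nat with (2 * (3 * s + 2))%nat by lia.
    now rewrite collatz_odd, collatz_double.
Qed.

End DyadicUnitsInClosure.

(** * Density *)

Definition trunc (M : nat) (f : nat -> C) : nat -> C := fun n => if (n <=? M)%nat then f n else 0%C.

Section Averaging.

Variable omega : nat -> R.
Hypothesis omega_pos : wpos omega.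
Variable delta : R.
Hypothesis delta_pos : 0 < delta.
Hypothesis omega_ge_delta : forall n, (1 <= n)%nat -> delta <= omega n.
Variable P : C -> Prop.
Hypothesis unit_step : forall a, (3 <= a)%nat ->
  exists b, (a < b)%nat /\ in_eigclosure omega P (csub (ej a) (ej b)).

Lemma wnorm2_vadd_unit a s : (3 <= a)%nat -> inX omega s -> s a = 0%C ->
  wnorm2 omega (vadd (ej a) s) = / omega a + wnorm2 omega s.
Proof.
  intros Ha HS HSa. unfold wnorm2.
  rewrite (Series_ext _ (fun n => wterm omega (ej a) n + wterm omega s n)).
  - rewrite Series_plus by (apply HS || (eexists; apply is_series_wterm_ej, Ha)).
    now rewrite (is_series_unique _ _ (is_series_wterm_ej omega a Ha)).
  - intros n. unfold wterm, vadd, ej. destruct (Nat.eqb_spec n a) as [->|].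
    + rewrite HSa, Cplus_0_r, Cmod_0. destruct (3 <=? a)%nat; unfold Rdiv; ring.
    + rewrite Cplus_0_l, Cmod_0. destruct (3 <=? n)%nat; unfold Rdiv; ring.
Qed.

(* The witness is [s = e_(a_1) + ... + e_(a_N)] along a chain [a < a_1 < ... < a_N] of [unit_step]. *)
Lemma eigclosure_telescope N a : (3 <= a)%nat ->
  exists s, inX omega s /\ wnorm2 omega s <= INR N / delta /\ (forall n, (n <= a)%nat -> s n = 0%C) /\
    in_eigclosure omega P (csub (vscal (INR N) (ej a)) s).
Proof.
  revert a. induction N as [|N IH]; intros a Ha.
  - exists vzero. split; [apply inX_vzero|]. rewrite wnorm2_vzero. split; [simpl; unfold Rdiv; lra|].
    split; [reflexivity|].
    replace (csub _ _) with vzero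
      by (apply functional_extensionality; intros n; unfold csub, vscal, vzero; simpl; ring).
    apply eigclosure_of_eigspan, eigspan_vzero; auto.
  - destruct (unit_step a Ha) as [b [Hab Hstep]].
    destruct (IH b) as [s [HS [HSn [HSb HclS]]]]; [lia|].
    exists (vadd (ej b) s). split; [apply inX_vadd; auto; apply inX_ej; lia|]. split; [|split].
    + rewrite wnorm2_vadd_unit, S_INR by (auto; lia).
      assert (/ omega b <= / delta) by (apply Rinv_le_contravar; auto; apply omega_ge_delta; lia).
      unfold Rdiv in *. rewrite Rmult_plus_distr_r. lra.
    + intros n Hn. unfold vadd, ej. rewrite HSb by lia. destruct (Nat.eqb_spec n b); [lia|ring].
    + replace (csub _ _) with (vadd (vscal (INR (S N)) (csub (ej a) (ej b))) (csub (vscal (INR N) (ej b)) s)).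
      * apply eigclosure_vadd; auto using eigclosure_vscal.
      * apply functional_extensionality. intros n. unfold vadd, vscal, csub. rewrite S_INR, RtoC_plus. ring.
Qed.

Lemma eigclosure_unit a : (3 <= a)%nat -> in_eigclosure omega P (ej a).
Proof.
  intros Ha. apply eigclosure_of_approx; auto; [apply inX_ej, Ha|]. intros eps He.
  destruct (INR_unbounded (/ (delta * eps))) as [N HN].
  assert (Hde : 0 < delta * eps) by (apply Rmult_lt_0_compat; auto).
  assert (HN0 : 0 < INR N) by (eapply Rlt_trans; [|exact HN]; apply Rinv_0_lt_compat, Hde).
  destruct (eigclosure_telescope N a Ha) as [s [Hs [Hsn [_ Hcl]]]].
  set (h := vscal (RtoC (/ INR N)) (csub (vscal (INR N) (ej a)) s)).
  exists h. split; [apply eigclosure_vscal; auto|].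
  replace (csub (ej a) h) with (vscal (RtoC (/ INR N)) s).
  - rewrite wnorm2_vscal, Cmod_R, Rabs_pos_eq by (left; apply Rinv_0_lt_compat, HN0).
    apply Rle_lt_trans with ((/ INR N) ^ 2 * (INR N / delta)).
    + apply Rmult_le_compat_l; auto using pow2_ge_0.
    + assert (H1 : 1 < INR N * (delta * eps)).
      { apply (Rmult_lt_compat_r (delta * eps)) in HN; auto. rewrite Rinv_l in HN; lra. }
      replace ((/ INR N) ^ 2 * (INR N / delta)) with (/ (INR N * delta)) by (field; lra).
      apply (Rmult_lt_reg_l (INR N * delta)); [nra|]. rewrite Rinv_r; nra.
  - apply functional_extensionality. intros n. unfold h, csub, vscal.
    rewrite RtoC_inv by lra. field. apply RtoC_neq_0. lra.
Qed.

Lemma eigclosure_trunc f : inX omega f -> forall M, in_eigclosure omega P (trunc M f).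
Proof.
  intros [Hf0 _]. induction M as [|M IH].
  - replace (trunc 0 f) with vzero; [apply eigclosure_of_eigspan, eigspan_vzero; auto|].
    apply functional_extensionality. intros n. unfold trunc, vzero.
    destruct (Nat.leb_spec n 0); [apply eq_sym, Hf0; lia|reflexivity].
  - replace (trunc (S M) f) with (vadd (trunc M f) (vscal (f (S M)) (ej (S M)))).
    + apply eigclosure_vadd; auto. destruct (Nat.lt_ge_cases (S M) 3).
      * rewrite Hf0 by auto. replace (vscal 0 (ej (S M))) with vzero.
        -- apply eigclosure_of_eigspan, eigspan_vzero; auto.
        -- apply functional_extensionality. intros n. unfold vscal, vzero. ring.
      * apply eigclosure_vscal, eigclosure_unit; auto.
    + apply functional_extensionality. intros n. unfold trunc, vadd, vscal, ej.
      destruct (Nat.eqb_spec n (S M)), (Nat.leb_spec n M), (Nat.leb_spec n (S M)); try lia; subst; ring.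
Qed.

Lemma eigclosure_of_inX f : inX omega f -> in_eigclosure omega P f.
Proof.
  intros Hf. apply eigclosure_of_approx; auto. intros eps He.
  destruct (Series_tail_small (wterm omega f)) with (eps := eps) as [L HL];
    auto using wterm_nonneg; [apply Hf|].
  exists (trunc L f). split; [apply eigclosure_trunc, Hf|].
  unfold wnorm2. rewrite (Series_ext _ (tail (S L) (wterm omega f))); [apply HL; lia|].
  intros n. unfold wterm, tail, csub, trunc.
  destruct (Nat.leb_spec n L), (Nat.ltb_spec n (S L)); try lia.
  - replace (f n - f n)%C with (RtoC 0) by ring. rewrite Cmod_0. destruct (3 <=? n)%nat; unfold Rdiv; ring.
  - now replace (f n - 0)%C with (f n) by ring.
Qed.

Lemma dense_eigspan : dense_in_X omega (in_eigspan omega P).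
Proof.
  intros f Hf eps He.
  destruct (proj2 (eigclosure_of_inX f Hf) (eps ^ 2)) as [g [Hg Hfg]]; [apply pow_lt, He|].
  exists g. split; auto. unfold wnorm. rewrite <- (sqrt_pow2 eps) by lra.
  apply sqrt_lt_1; auto using pow2_ge_0.
  apply wnorm2_nonneg, inX_csub; eauto using inX_of_eigspan.
Qed.

End Averaging.

Lemma dense_eigspan_circle omega delta r P : wpos omega -> 0 < delta ->
  (forall n, (1 <= n)%nat -> delta <= omega n) -> 0 < r ->
  (forall a, (3 <= a)%nat -> ex_series (dyadic_weight omega r a)) -> (forall mu, Cmod mu = r -> P mu) ->
  dense_in_X omega (in_eigspan omega P).
Proof.
  intros Hpos Hd Hdl Hr Hw HP. apply (dense_eigspan omega Hpos delta Hd Hdl P).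
  intros a Ha. exact (eigclosure_unit_step omega Hpos r Hr Hw P HP a Ha).
Qed.

Lemma ex_series_geom_bound (a : nat -> R) B q : (forall n, 0 <= a n <= B * q ^ n) -> 0 <= q < 1 ->
  ex_series a.
Proof.
  intros Ha Hq. apply (ex_series_Rle _ _ Ha), ex_series_Rscal, ex_series_geom.
  rewrite Rabs_pos_eq; lra.
Qed.

Lemma pow_sqr_comm (x : R) n : (x ^ n) ^ 2 = (x ^ 2) ^ n.
Proof. rewrite <- !pow_mult. f_equal. lia. Qed.

Lemma godefroy_shapiro_of_growth omega :
  wpos omega ->
  (exists delta, 0 < delta /\ forall n, (1 <= n)%nat -> delta <= omega n) ->
  (exists rho, 1 < rho /\
     forall k, (3 <= k)%nat -> exists B, forall n : nat, rho ^ n / omega (k * 2 ^ n)%nat <= B) ->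
  godefroy_shapiro omega.
Proof.
  intros Hpos [delta [Hd Hdl]] [rho [Hrho HB]].
  assert (Hw : forall a n, (3 <= a)%nat -> 0 < omega (a * 2 ^ n)%nat)
    by (intros a n Ha; apply Hpos; pose proof (pow2_pos n); nia).
  split.
  - apply (dense_eigspan_circle omega delta (/ 2)); auto; [lra| |intros mu ->; lra].
    intros a Ha. apply (ex_series_geom_bound _ (/ delta) (/ 4)); [|lra].
    intros n. split; [apply dyadic_weight_nonneg; auto; lia|].
    unfold dyadic_weight. rewrite pow_sqr_comm. replace ((/ 2) ^ 2) with (/ 4) by field.
    unfold Rdiv. rewrite Rmult_comm. apply Rmult_le_compat_r; [apply pow_le; lra|].
    apply Rinv_le_contravar; auto. apply Hdl. pose proof (pow2_pos n). nia.
  - set (r := sqrt ((1 + rho) / 2)).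
    assert (Hr2 : r ^ 2 = (1 + rho) / 2) by (unfold r; rewrite pow2_sqrt; lra).
    assert (Hr1 : 1 < r) by (unfold r; rewrite <- sqrt_1 at 1; apply sqrt_lt_1; lra).
    apply (dense_eigspan_circle omega delta r); auto; [lra| |intros mu ->; lra].
    intros a Ha. destruct (HB a Ha) as [B HBa].
    set (q := (1 + rho) / (2 * rho)).
    assert (Hq : 0 <= q < 1).
    { unfold q. split; [apply Rdiv_le_0_compat; lra|].
      apply (Rmult_lt_reg_r (2 * rho)); [lra|]. unfold Rdiv. rewrite Rmult_assoc, Rinv_l; lra. }
    apply (ex_series_geom_bound _ B q); auto.
    intros n. split; [apply dyadic_weight_nonneg; auto; lia|].
    unfold dyadic_weight. rewrite pow_sqr_comm, Hr2.
    replace ((1 + rho) / 2) with (q * rho) by (unfold q; field; lra).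
    rewrite Rpow_mult_distr. unfold Rdiv. rewrite Rmult_assoc, (Rmult_comm B).
    apply Rmult_le_compat_l; [apply pow_le; lra|]. apply HBa.
Qed.

Lemma omega0_pos n : 0 < omega0 n.
Proof. unfold omega0. pose proof (pos_INR n). pose proof PI_RGT_0. apply Rdiv_lt_0_compat; lra. Qed.

Lemma omega0_ge n : / PI <= omega0 n.
Proof.
  unfold omega0, Rdiv. pose proof (pos_INR n). pose proof (Rinv_0_lt_compat _ PI_RGT_0).
  rewrite <- (Rmult_1_l (/ PI)) at 1. apply Rmult_le_compat_r; lra.
Qed.

Lemma omega0_dyadic_bound k n : (1 <= k)%nat -> 2 ^ n / omega0 (k * 2 ^ n)%nat <= PI.
Proof.
  intros Hk. pose proof PI_RGT_0. unfold omega0. rewrite mult_INR, pow_INR.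
  replace (INR 2) with 2 by reflexivity.
  assert (H2n : 0 < 2 ^ n) by (apply pow_lt; lra).
  assert (Hk1 : 1 <= INR k) by (apply (le_INR 1); auto).
  replace (2 ^ n / ((INR k * 2 ^ n + 1) / PI)) with (PI * (2 ^ n / (INR k * 2 ^ n + 1))) by (field; nra).
  rewrite <- (Rmult_1_r PI) at 2. apply Rmult_le_compat_l; [lra|].
  apply (Rmult_le_reg_r (INR k * 2 ^ n + 1)); [nra|].
  unfold Rdiv. rewrite Rmult_assoc, Rinv_l by nra. nra.
Qed.

Theorem theorem3p6 :
  (forall omega : nat -> R,
     (forall n, (1 <= n)%nat -> 0 < omega n) ->
     (exists delta, 0 < delta /\ forall n, (1 <= n)%nat -> delta <= omega n) ->
     T_bounded omega ->
     (exists rho, 1 < rho /\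
        forall k, (3 <= k)%nat -> exists B, forall n : nat,
          rho ^ n / omega (k * 2 ^ n)%nat <= B) ->
     godefroy_shapiro omega)
  /\ godefroy_shapiro omega0.
Proof.
  split.
  -
    intros omega Hpos Hdelta _ Hrho. now apply godefroy_shapiro_of_growth.
  - apply godefroy_shapiro_of_growth.
    + intros n _. apply omega0_pos.
    + exists (/ PI). split; [apply Rinv_0_lt_compat, PI_RGT_0|]. intros n _. apply omega0_ge.
    + exists 2. split; [lra|]. intros k Hk. exists PI. intros n. apply omega0_dyadic_bound. lia.
Qed.
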